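(* Consider the graded cluster algebra $\mathcal{A}\big((x_1,x_2,x_3),B,(1,1,2)\big)$ with $B=\begin{pmatrix}0&2&-1\\-2&0&1\\1&-1&0\end{pmatrix}$. It has exactly one cluster variable of degree $2$ and exactly one cluster variable of degree $-2$.
   Context: Graded cluster algebras: for a $3\times3$ skew-symmetric integer matrix $B=(b_{ij})$ and $k\in\{1,2,3\}$, $\mu_k(B)=(b'_{ij})$ with $b'_{ij}=-b_{ij}$ if $i=k$ or $j=k$ and $b'_{ij}=b_{ij}+\operatorname{sgn}(b_{ik})\max(b_{ik}b_{kj},0)$ otherwise. A seed $((x_1,x_2,x_3),B)$ mutates in direction $k$ to $(x',\mu_k B)$ with $x'_j=x_j$ ($j\ne k$) and $x'_k=\big(\prod_{b_{ik}>0}x_i^{b_{ik}}+\prod_{b_{ik}<0}x_i^{-b_{ik}}\big)/x_k$. Cluster variables are all entries of clusters reachable by iterated mutation; $\mathcal{A}(x,B,g)$ is the algebra they generate, graded by $\deg x_i=g_i$ where $Bg=0$; under mutation at $k$ the degree vector becomes $g'$ with $g'_j=g_j$ ($j\neq k$), $g'_k=-g_k+\sum_{b_{ik}>0}b_{ik}g_i$, and every cluster variable is homogeneous. *)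

From HB Require Import structures.
From mathcomp Require Import all_boot all_order all_algebra.
From mathcomp Require Import fraction.
From mathcomp Require Import mpoly.
Set Implicit Arguments. Unset Strict Implicit. Unset Printing Implicit Defensive.
Import Order.TTheory GRing.Theory Num.Theory.
Local Open Scope ring_scope.

Definition ratfun3 : fieldType := {fraction {mpoly rat[3]}}.

(* The initial cluster variables x_1, x_2, x_3 (indexed by 'I_3 = {0,1,2}). *)
Definition xinit (i : 'I_3) : ratfun3 := tofrac ('X_i : {mpoly rat[3]}).

Definition mutB (k : 'I_3) (B : 'M[int]_3) : 'M[int]_3 :=
  \matrix_(i < 3, j < 3)
    if (i == k) || (j == k) then - B i j
    else B i j + sgz (B i k) * Num.max (B i k * B k j) 0.

Definition mutx (k : 'I_3) (B : 'M[int]_3) (x : 'I_3 -> ratfun3) : 'I_3 -> ratfun3 :=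
  fun j => if j == k then
     ((\prod_(i < 3 | 0 < B i k) x i ^+ `|B i k|%N)
      + (\prod_(i < 3 | B i k < 0) x i ^+ `|B i k|%N)) / x k
   else x j.

Definition mutg (k : 'I_3) (B : 'M[int]_3) (g : 'I_3 -> int) : 'I_3 -> int :=
  fun j => if j == k then - g k + \sum_(i < 3 | 0 < B i k) B i k * g i
   else g j.

Inductive reachable (x0 : 'I_3 -> ratfun3) (B0 : 'M[int]_3) (g0 : 'I_3 -> int) :
  ('I_3 -> ratfun3) -> 'M[int]_3 -> ('I_3 -> int) -> Prop :=
| reach_init : reachable x0 B0 g0 x0 B0 g0
| reach_mut x B g (k : 'I_3) : reachable x0 B0 g0 x B g ->
    reachable x0 B0 g0 (mutx k B x) (mutB k B) (mutg k B g).

Definition cluster_var_of_deg x0 B0 g0 (d : int) (z : ratfun3) : Prop :=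
  exists x B g (k : 'I_3), reachable x0 B0 g0 x B g /\ x k = z /\ g k = d.

Definition B6 : 'M[int]_3 :=
  \matrix_(i < 3, j < 3)
    (nth 0 (nth [::] [:: [:: 0; 2; -1]; [:: -2; 0; 1]; [:: 1; -1; 0]] i) j : int).

Definition g6 (i : 'I_3) : int := nth 0 [:: 1; 1; 2] i.

From mathcomp Require Import all_boot all_order all_algebra.
From mathcomp Require Import fraction.
From mathcomp Require Import mpoly.
From mathcomp Require Import ring.
Set Implicit Arguments. Unset Strict Implicit. Unset Printing Implicit Defensive.
Import Order.TTheory GRing.Theory Num.Theory.
Local Open Scope ring_scope.

(** Mutation keeps the exchange matrix of [B6] among twelve matrices (six up to
    sign), and the degree vector is then, up to a global sign, a fixed vector
    attached to the matrix.  Along any mutation sequence we carry the invariant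
    that [x3 = x_3] and [w = (x_3 + (x_1 + x_2)^2) / (x_1 x_2 x_3)] are given in
    the current cluster by two rational expressions that depend only on the
    matrix, swapped when the degree vector is negated; one mutation step
    preserves it by a finite check and 36 field identities.  In a seed with a
    degree 2 (resp. -2) entry, the expression for [x3] (resp. [w]) is that
    cluster variable itself.  Denominators never vanish because every cluster
    variable is a quotient of polynomials that are positive at (1, 1, 1). *)

Section PositiveAtOnes.
Variables (R : realDomainType) (n : nat).
Local Notation ratfun := {fraction {mpoly R[n]}}.

Definition pos_at_ones (z : ratfun) : Prop :=
  exists p q : {mpoly R[n]},
    [/\ 0 < p.@[fun _ => 1], 0 < q.@[fun _ => 1] & z = tofrac p / tofrac q].

Lemma tofrac_pos_neq0 (p : {mpoly R[n]}) : 0 < p.@[fun _ => 1] -> tofrac p != 0 :> ratfun.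
Proof. by apply: contraTneq => /eqP; rewrite tofrac_eq0 => /eqP ->; rewrite meval0 ltxx. Qed.

Lemma pos_at_ones_neq0 z : pos_at_ones z -> z != 0.
Proof. by case=> p [q [p_gt0 q_gt0 ->]]; rewrite mulf_neq0 ?invr_eq0 ?tofrac_pos_neq0. Qed.

Lemma pos_at_ones_tofrac p : 0 < p.@[fun _ => 1] -> pos_at_ones (tofrac p).
Proof. by exists p, 1; rewrite meval1 ltr01 tofrac1 divr1. Qed.

Lemma pos_at_ones1 : pos_at_ones 1.
Proof. by rewrite -tofrac1; apply: pos_at_ones_tofrac; rewrite meval1 ltr01. Qed.

Lemma pos_at_onesX i : pos_at_ones (tofrac 'X_i).
Proof. by apply: pos_at_ones_tofrac; rewrite mevalXU ltr01. Qed.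

Lemma pos_at_onesM a b : pos_at_ones a -> pos_at_ones b -> pos_at_ones (a * b).
Proof.
case=> [p1 [q1 [p1_gt0 q1_gt0 ->]]] [p2 [q2 [p2_gt0 q2_gt0 ->]]].
exists (p1 * p2), (q1 * q2); rewrite !mevalM !mulr_gt0 //.
by rewrite !tofracM mulf_div.
Qed.

Lemma pos_at_onesD a b : pos_at_ones a -> pos_at_ones b -> pos_at_ones (a + b).
Proof.
case=> [p1 [q1 [p1_gt0 q1_gt0 ->]]] [p2 [q2 [p2_gt0 q2_gt0 ->]]].
exists (p1 * q2 + p2 * q1), (q1 * q2).
rewrite mevalD !mevalM addr_gt0 ?mulr_gt0 //.
by rewrite tofracD !tofracM addf_div ?tofrac_pos_neq0.
Qed.

Lemma pos_at_onesV a : pos_at_ones a -> pos_at_ones a^-1.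
Proof. by case=> p [q [p_gt0 q_gt0 ->]]; exists q, p; rewrite invf_div. Qed.

Lemma pos_at_onesXn a k : pos_at_ones a -> pos_at_ones (a ^+ k).
Proof.
move=> a_pos; elim: k => [|k IHk]; first by rewrite expr0; apply: pos_at_ones1.
by rewrite exprS; apply: pos_at_onesM.
Qed.

Lemma pos_at_ones_prod (I : finType) (P : pred I) (F : I -> ratfun) :
  (forall i, pos_at_ones (F i)) -> pos_at_ones (\prod_(i | P i) F i).
Proof. by move=> F_pos; apply: big_ind => //; [exact: pos_at_ones1 | exact: pos_at_onesM]. Qed.

End PositiveAtOnes.

Definition pos_part (z : int) : nat := if z is Posz m then m else 0.
Definition neg_part (z : int) : nat := if z is Negz m then m.+1 else 0.

Lemma expr_pos_part (R : pzSemiRingType) (x : R) (z : int) :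
  (if 0 < z then x ^+ `|z|%N else 1) = x ^+ pos_part z.
Proof. by case: z => [[|m]|m]. Qed.

Lemma expr_neg_part (R : pzSemiRingType) (x : R) (z : int) :
  (if z < 0 then x ^+ `|z|%N else 1) = x ^+ neg_part z.
Proof. by case: z. Qed.

Definition exchange_binomial (R : comPzSemiRingType) (n : nat)
    (b : 'I_n -> int) (x : 'I_n -> R) : R :=
  \prod_i x i ^+ pos_part (b i) + \prod_i x i ^+ neg_part (b i).

Lemma mutx_exchange k B x :
  mutx k B x k = exchange_binomial (fun i => B i k) x / x k.
Proof.
rewrite /mutx eqxx !(big_mkcond (fun i => _ < _)) /=.
by rewrite (eq_bigr _ (fun i _ => expr_pos_part _ _))
           (eq_bigr _ (fun i _ => expr_neg_part _ _)).
Qed.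

Lemma mutx_pos_at_ones k B x :
  (forall i, pos_at_ones (x i)) -> forall i, pos_at_ones (mutx k B x i).
Proof.
move=> x_pos i; rewrite /mutx; case: eqP => _ //.
apply: pos_at_onesM; last exact: pos_at_onesV.
by apply: pos_at_onesD; apply: pos_at_ones_prod => j; apply: pos_at_onesXn.
Qed.

Local Notation i0 := (@Ordinal 3 0 isT).
Local Notation i1 := (@Ordinal 3 1 isT).
Local Notation i2 := (@Ordinal 3 2 isT).

Lemma ord3P (k : 'I_3) : [\/ k = i0, k = i1 | k = i2].
Proof.
by case: k => [[|[|[|m]]] k_lt] //; [apply: Or31 | apply: Or32 | apply: Or33];
  apply: val_inj.
Qed.

Lemma big_ord3 (R : Type) (idx : R) (op : Monoid.law idx) (F : 'I_3 -> R) :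
  \big[op/idx]_(i < 3) F i = op (op (F i0) (F i1)) (F i2).
Proof.
rewrite !big_ord_recr big_ord0 Monoid.simpm.
by congr (op (op (F _) (F _)) (F _)); apply: val_inj.
Qed.

(** Types [t] and [t + 6] have opposite exchange matrices and the same degree
    vector.  Mutation at [k] sends type [t] to type [seed_next t k] and
    negates the degree vector iff [seed_flip t k].  The entries are [%Z]
    literals, i.e. [Posz]/[Negz] constructors, so that [pos_part] and
    [neg_part] of them reduce by [simpl]. *)
Definition seed_B_table : seq (seq (seq int)) := [::
  [:: [:: 0; 2; -1]; [:: -2; 0; 1]; [:: 1; -1; 0]];
  [:: [:: 0; -1; -1]; [:: 1; 0; -1]; [:: 1; 1; 0]];
  [:: [:: 0; -1; -1]; [:: 1; 0; 1]; [:: 1; -1; 0]];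
  [:: [:: 0; -1; 1]; [:: 1; 0; -2]; [:: -1; 2; 0]];
  [:: [:: 0; -1; 1]; [:: 1; 0; 1]; [:: -1; -1; 0]];
  [:: [:: 0; -1; 2]; [:: 1; 0; -1]; [:: -2; 1; 0]];
  [:: [:: 0; -2; 1]; [:: 2; 0; -1]; [:: -1; 1; 0]];
  [:: [:: 0; 1; 1]; [:: -1; 0; 1]; [:: -1; -1; 0]];
  [:: [:: 0; 1; 1]; [:: -1; 0; -1]; [:: -1; 1; 0]];
  [:: [:: 0; 1; -1]; [:: -1; 0; 2]; [:: 1; -2; 0]];
  [:: [:: 0; 1; -1]; [:: -1; 0; -1]; [:: 1; 1; 0]];
  [:: [:: 0; 1; -2]; [:: -1; 0; 1]; [:: 2; -1; 0]]]%Z.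

Definition seed_g_table : seq (seq int) := [::
  [:: 1; 1; 2]; [:: -1; 1; -1]; [:: -1; -1; 1]; [:: 2; 1; 1]; [:: -1; 1; 1]; [:: 1; 2; 1];
  [:: 1; 1; 2]; [:: -1; 1; -1]; [:: -1; -1; 1]; [:: 2; 1; 1]; [:: -1; 1; 1]; [:: 1; 2; 1]]%Z.

Definition seed_next_table : seq (seq nat) := [::
  [:: 6; 6; 8]; [:: 8; 11; 4]; [:: 7; 10; 6]; [:: 10; 9; 9]; [:: 9; 8; 1]; [:: 11; 7; 11];
  [:: 0; 0; 2]; [:: 2; 5; 10]; [:: 1; 4; 0]; [:: 4; 3; 3]; [:: 3; 2; 7]; [:: 5; 1; 5]].

Definition seed_flip_table : seq (seq bool) := [::
  [:: false; false; true]; [:: true; true; false]; [:: true; false; true];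
  [:: false; false; false]; [:: false; false; false]; [:: false; true; false];
  [:: false; false; true]; [:: true; true; false]; [:: true; false; true];
  [:: false; false; false]; [:: false; false; false]; [:: false; true; false]].

Definition seedB (t i j : nat) : int := nth 0 (nth [::] (nth [::] seed_B_table t) i) j.
Definition seedg (t i : nat) : int := nth 0 (nth [::] seed_g_table t) i.
Definition seed_next (t k : nat) : nat := nth 0 (nth [::] seed_next_table t) k.
Definition seed_flip (t k : nat) : bool := nth false (nth [::] seed_flip_table t) k.

(** Copies of [mutB] and [mutg] on [nat] indices, which [vm_compute] evaluates. *)
Definition mutBn (b : nat -> nat -> int) (k i j : nat) : int :=
  if (i == k) || (j == k) then - b i j
  else b i j + sgz (b i k) * Num.max (b i k * b k j) 0.

Definition mutgn (b : nat -> nat -> int) (g : nat -> int) (k j : nat) : int :=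
  let contrib i := if 0 < b i k then b i k * g i else 0 in
  if j == k then - g k + (contrib 0 + contrib 1 + contrib 2) else g j.

Definition seed_types_closed : bool :=
  all (fun t => all (fun k => (seed_next t k < 12)%N && all (fun i =>
      (mutgn (seedB t) (seedg t) k i == (-1) ^+ seed_flip t k * seedg (seed_next t k) i)
      && all (fun j => mutBn (seedB t) k i j == seedB (seed_next t k) i j) (iota 0 3))
    (iota 0 3)) (iota 0 3)) (iota 0 12).

Lemma seed_types_closedP : seed_types_closed.
Proof. by vm_compute. Qed.

Lemma seed_type_mut t (k i j : 'I_3) : (t < 12)%N ->
  [/\ (seed_next t k < 12)%N,
      mutgn (seedB t) (seedg t) k i = (-1) ^+ seed_flip t k * seedg (seed_next t k) i &
      mutBn (seedB t) k i j = seedB (seed_next t k) i j].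
Proof.
have mem3 (l : 'I_3) : val l \in iota 0 3 by rewrite mem_iota ltn_ord.
move=> t_lt; move/allP: seed_types_closedP => /(_ t); rewrite mem_iota => /(_ t_lt).
move=> /allP/(_ k (mem3 k))/andP[-> /allP/(_ i (mem3 i))/andP[/eqP -> /allP/(_ j (mem3 j))/eqP ->]].
by [].
Qed.

Definition of_seed_type (B : 'M[int]_3) (g : 'I_3 -> int) (t : nat) (s : bool) : Prop :=
  (forall i j : 'I_3, B i j = seedB t i j) /\ (forall i : 'I_3, g i = (-1) ^+ s * seedg t i).

Lemma mutgZ k B g (c : int) :
  mutg k B (fun i => c * g i) =1 (fun j => c * mutg k B g j).
Proof.
move=> j; rewrite /mutg; case: eqP => // _.
by rewrite mulrDr mulrN big_distrr; congr (_ + _); apply: eq_bigr => i _; rewrite mulrCA.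
Qed.

Lemma eq_mutg k B g h : g =1 h -> mutg k B g =1 mutg k B h.
Proof. by move=> gh j; rewrite /mutg !gh; under eq_bigr do rewrite gh. Qed.

Lemma mutg_mutgn k (B : 'M[int]_3) (b : nat -> nat -> int) (h : nat -> int) :
  (forall i j : 'I_3, B i j = b i j) -> mutg k B (fun i => h i) =1 mutgn b h k.
Proof. by move=> BE j; rewrite /mutg /mutgn big_mkcond big_ord3 /= !BE. Qed.

Lemma of_seed_type_mut B g t s (k : 'I_3) : of_seed_type B g t s -> (t < 12)%N ->
  of_seed_type (mutB k B) (mutg k B g) (seed_next t k) (s (+) seed_flip t k).
Proof.
move=> [BE gE] t_lt; split=> [i j | j].
  have [_ _ <-] := seed_type_mut k i j t_lt.
  by rewrite mxE /mutBn !BE.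
have [_ sgE _] := seed_type_mut k j j t_lt.
by rewrite (eq_mutg _ _ gE) mutgZ (mutg_mutgn _ _ BE) sgE signr_addb mulrA.
Qed.

Definition swap_if (T : Type) (s : bool) (p : T * T) : T * T :=
  if s then swap_pair p else p.

Lemma swap_ifK (T : Type) (s : bool) : involutive (@swap_if T s).
Proof. by case: s => // p; rewrite /swap_if swap_pairK. Qed.

Lemma swap_if_addb (T : Type) (s f : bool) (p : T * T) :
  swap_if (s (+) f) p = swap_if s (swap_if f p).
Proof. by case: s; case: f; rewrite /swap_if ?swap_pairK. Qed.

Section SeedExpressions.
Variable K : fieldType.
Implicit Types (x : 'I_3 -> K).

(** [x3] and [w] written in the cluster of a seed of type [t]. *)
Definition x3_expr (t : nat) x : K :=
  match t with
  | 0 | 6 => x i2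
  | 1 | 7 => (1 + x i1 * x i2 + x i0 * x i1) / (x i0 * x i2)
  | 2 | 8 => (1 + x i1 * x i2 + x i0 * x i2) / (x i0 * x i1)
  | 3 | 9 => x i0
  | 4 | 10 => (x i1 + x i2) / x i0
  | _ => x i1
  end.

Definition w_expr (t : nat) x : K :=
  match t with
  | 0 | 6 => (x i2 + (x i0 + x i1) ^+ 2) / (x i0 * x i1 * x i2)
  | 1 | 7 => (x i0 + x i2) / x i1
  | 2 | 8 => (x i0 + x i1) / x i2
  | 3 | 9 => (x i0 + (x i1 + x i2) ^+ 2) / (x i0 * x i1 * x i2)
  | 4 | 10 => (1 + x i0 * x i2 + x i0 * x i1) / (x i1 * x i2)
  | _ => (x i1 + (x i0 + x i2) ^+ 2) / (x i0 * x i1 * x i2)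
  end.

Definition mut_seed (t : nat) (k : 'I_3) x : 'I_3 -> K :=
  fun j => if j == k then exchange_binomial (fun i => seedB t i k) x / x k else x j.

Definition seed_exprs (t : nat) x : K * K := (x3_expr t x, w_expr t x).

Lemma seed_exprs_mut t (k : 'I_3) x : (t < 12)%N -> (forall i, x i != 0) ->
  exchange_binomial (fun i => seedB t i k) x != 0 ->
  seed_exprs (seed_next t k) (mut_seed t k x) = swap_if (seed_flip t k) (seed_exprs t x).
Proof.
move=> t_lt x_neq0.
rewrite /seed_exprs /swap_if /swap_pair /mut_seed /exchange_binomial !big_ord3 /=.
case: (ord3P k) => ->; do 12?[case: t t_lt => [|t] t_lt] => //= E_neq0;
rewrite ?expr0 ?expr1 ?mul1r ?mulr1 in E_neq0 *; congr (_, _); field;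
by rewrite ?x_neq0 ?E_neq0.
Qed.

Lemma eq_seed_exprs t x y : x =1 y -> seed_exprs t x = seed_exprs t y.
Proof. by move=> xy; rewrite /seed_exprs /x3_expr /w_expr !xy. Qed.

Lemma seed_deg2 t (s : bool) (k : 'I_3) x : (t < 12)%N ->
  ((-1) ^+ s * seedg t k = 2 -> (swap_if s (seed_exprs t x)).1 = x k) /\
  ((-1) ^+ s * seedg t k = -2 -> (swap_if s (seed_exprs t x)).2 = x k).
Proof. by case: s; case: (ord3P k) => ->; do 12?[case: t => [|t]]. Qed.

End SeedExpressions.

Lemma mutx_mut_seed k (B : 'M[int]_3) x t :
  (forall i j : 'I_3, B i j = seedB t i j) -> mutx k B x =1 mut_seed t k x.
Proof.
move=> BE j; rewrite /mut_seed; case: eqP => [->|/eqP jk]; last by rewrite /mutx (negPf jk).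
rewrite mutx_exchange /exchange_binomial; under eq_bigr do rewrite BE.
by under [X in _ + X]eq_bigr do rewrite BE.
Qed.

Definition x3 : ratfun3 := xinit i2.
Definition w : ratfun3 :=
  (xinit i2 + (xinit i0 + xinit i1) ^+ 2) / (xinit i0 * xinit i1 * xinit i2).

Definition expresses_x3_w (t : nat) (s : bool) (x : 'I_3 -> ratfun3) : Prop :=
  (x3, w) = swap_if s (seed_exprs t x).

Lemma of_seed_type_init : of_seed_type B6 g6 0 false.
Proof.
split=> [i j | i]; last by case: (ord3P i) => ->.
by rewrite mxE; case: (ord3P i) => ->; case: (ord3P j) => ->.
Qed.

Lemma reachable_seed_type x B g : reachable xinit B6 g6 x B g ->
  (forall i, pos_at_ones (x i)) /\
  exists t s, [/\ (t < 12)%N, of_seed_type B g t s & expresses_x3_w t s x].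
Proof.
elim=> [|{}x {}B {}g k _ [x_pos [t [s [t_lt tB xE]]]]].
  split=> [i | ]; first exact: pos_at_onesX.
  by exists 0%N, false; split=> //; exact: of_seed_type_init.
split; first exact: mutx_pos_at_ones.
have [next_lt _ _] := seed_type_mut k k k t_lt.
exists (seed_next t k), (s (+) seed_flip t k); split; [done | exact: of_seed_type_mut |].
have E_neq0 : exchange_binomial (fun i => seedB t i k) x != 0.
  apply: contraTneq (pos_at_ones_neq0 (mutx_pos_at_ones k B x_pos k)) => E0.
  by rewrite negbK (mutx_mut_seed _ _ tB.1) /mut_seed eqxx E0 mul0r.
have := seed_exprs_mut t_lt (fun i => pos_at_ones_neq0 (x_pos i)) E_neq0.
rewrite /expresses_x3_w -(eq_seed_exprs _ (mutx_mut_seed _ _ tB.1)) => ->.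
by rewrite swap_if_addb swap_ifK.
Qed.

Lemma reachable_deg2 x B g k : reachable xinit B6 g6 x B g ->
  (g k = 2 -> x k = x3) /\ (g k = -2 -> x k = w).
Proof.
case/reachable_seed_type => _ [t [s [t_lt [_ gE] xE]]].
have [x3E wE] := seed_deg2 s k x t_lt.
by rewrite gE; split=> [/x3E | /wE] <-; rewrite -xE.
Qed.

Theorem mainTheorem6 :
  (exists! z : ratfun3, cluster_var_of_deg xinit B6 g6 2 z) /\
  (exists! z : ratfun3, cluster_var_of_deg xinit B6 g6 (-2) z).
Proof.
have deg2_unique d z : cluster_var_of_deg xinit B6 g6 d z ->
    (d = 2 -> x3 = z) /\ (d = -2 -> w = z).
  case=> [x [B [g [k [r [<- <-]]]]]]; have [x3E wE] := reachable_deg2 k r.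
  by split=> gk; [rewrite x3E | rewrite wE].
split.
  exists x3; split; last by move=> z /(deg2_unique 2) [->].
  by exists xinit, B6, g6, i2; split; first exact: reach_init.
have r := reach_mut i1 (reach_mut i0 (reach_mut i2 (reach_init xinit B6 g6))).
have [_ gE] := of_seed_type_mut i1
  (of_seed_type_mut i0 (of_seed_type_mut i2 of_seed_type_init isT) isT) isT.
have g_N2 : _ = -2 := gE i1.
exists w; split; last by move=> z /(deg2_unique (-2)) [_ ->].
by do 3!eexists; exists i1; split; [exact: r | split; [exact: (reachable_deg2 i1 r).2 | ]].
Qed.
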